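(* The generating function $F(x)=\sum_{n\ge0}f(n)x^n$ satisfies $$F(x)=\frac{B(x)-x}{(1-x)^2},$$ where $B(x)=\sum_{n\ge0}b(n)x^n$, and also $$F(x)=\frac{(1+x)^2}{1-x}F(x^2)-\frac{x(1-2x^2)}{(1-x)^2(1-x^2)}.$$
   Context: A partition $n=p_1+\cdots+p_k$ with $1\le p_1\le\cdots\le p_k$ is non-squashing if $p_1+\cdots+p_j\le p_{j+1}$ for all $1\le j\le k-1$; $b(n)$ is the number of non-squashing partitions of $n$ into distinct parts ($b(0)=1$). $f(n)$ is the number of (possibly empty) sets of distinct integers $1\le p_1<p_2<\cdots<p_k\le n$ satisfying $p_1+\cdots+p_j\le p_{j+1}$ for $1\le j\le k-1$. *)

From mathcomp Require Import all_boot all_order all_algebra.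
Set Implicit Arguments. Unset Strict Implicit. Unset Printing Implicit Defensive.
Import Order.TTheory GRing.Theory Num.Theory.

(* The increasing list of parts encoded by S : {set 'I_n}; element i encodes
   the integer i+1, so S ranges over the subsets of {1,...,n}. *)
Definition parts_of (n : nat) (S : {set 'I_n}) : seq nat :=
  sort leq [seq (val i).+1 | i <- enum S].

(* p_1 + ... + p_j <= p_{j+1} for all 1 <= j <= k-1 (list is 0-indexed). *)
Definition nonsquashing (s : seq nat) : bool :=
  all (fun j => sumn (take j s) <= nth 0 s j) (iota 1 (size s).-1).

Definition f (n : nat) : nat :=
  #|[set S : {set 'I_n} | nonsquashing (parts_of S)]|.

(* A
   partition of n into distinct parts is a set of positive integers with sum n
   (all parts are then <= n); b(0) = 1 (empty partition). *)
Definition b (n : nat) : nat :=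
  #|[set S : {set 'I_n} | (sumn (parts_of S) == n) && nonsquashing (parts_of S)]|.

Local Open Scope ring_scope.

Definition fps := nat -> int.

Definition fps_add (a c : fps) : fps := fun n => a n + c n.
Definition fps_sub (a c : fps) : fps := fun n => a n - c n.
Definition fps_mul (a c : fps) : fps :=
  fun n => \sum_(i < n.+1) a i * c (n - i)%N.
Definition fps_const (r : int) : fps := fun n => if n == 0%N then r else 0.
Definition fps_X : fps := fun n => if n == 1%N then 1 else 0.
Definition fps_subst_x2 (a : fps) : fps :=
  fun n => if odd n then 0 else a n./2.
Definition fps_inv_1mx : fps := fun _ => 1.

Definition Fgf : fps := fun n => (f n)%:Z.
Definition Bgf : fps := fun n => (b n)%:Z.

Lemma inv_1mx_spec n :
  fps_mul (fps_sub (fps_const 1) fps_X) fps_inv_1mx n = fps_const 1 n.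
Proof.
rewrite /fps_mul /fps_sub /fps_const /fps_X /fps_inv_1mx.
case: n => [|n]; first by rewrite big_ord1.
rewrite big_ord_recl /= big_ord_recl /= big1 ?addr0 ?subr0 ?mulr1 ?subrr //.
Qed.

(* Removing the largest part gives two recursions.  A non-squashing subset of
   {1..n+1} containing n+1 is a non-squashing S in {1..n} with sum S <= n+1,
   plus n+1; and a non-squashing set of sum k <= n+1 lies in {1..k}, so apart
   from {n+1} itself these are counted by b(0), ..., b(n+1):
     f(n+1) = f(n) + b(0) + ... + b(n+1) - 1.
   The parts other than the largest one of a non-squashing partition of n > 0
   form a non-squashing partition of some k <= n/2, whence
     b(n) + [n even] = b(0) + ... + b(n/2).
   Multiplication by 1 - x is injective on power series, so both identities can
   be checked after multiplying them by (1 - x)^2; the first then is the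
   recursion for f, the second a comparison of coefficients, split by parity,
   using both recursions. *)

From mathcomp Require Import all_boot all_order all_algebra.
From mathcomp Require Import ring zify.
From Stdlib Require Import FunctionalExtensionality.
Import GRing.Theory.

Fixpoint sets_upto (n : nat) : seq (seq nat) :=
  if n is k.+1 then sets_upto k ++ [seq rcons s k.+1 | s <- sets_upto k]
  else [:: [::]].

Lemma sorted_ltn_rcons s x :
  sorted ltn (rcons s x) = sorted ltn s && all (ltn^~ x) s.
Proof.
elim: s => [|y s IH] //=.
rewrite !(path_sortedE ltn_trans) IH all_rcons.
by case: (y < x); case: (all (ltn y) s); case: (sorted ltn s); case: (all _ s).
Qed.

Lemma mem_sets_upto n s :
  (s \in sets_upto n) = sorted ltn s && all (fun x => 0 < x <= n) s.
Proof.
elim: n s => [|n IH] s.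
  by case: s => [|[|x] s] //=; rewrite inE /= ?andbF.
rewrite /= mem_cat IH.
case/lastP: s => [|t x] //.
have -> : (rcons t x \in [seq rcons s n.+1 | s <- sets_upto n]) =
          (x == n.+1) && (t \in sets_upto n).
  apply/mapP/andP => [[u hu /rcons_inj [-> ->]] | [/eqP -> ht]]; first by [].
  by exists t.
rewrite IH sorted_ltn_rcons !all_rcons {IH}.
case: (sorted ltn t); rewrite /= ?andbF //.
have [-> | ne_xn] := eqVneq x n.+1.
  rewrite ltnn !andbF ltnSn /= -all_predI; apply: eq_all => y /=; lia.
rewrite andFb orbF.
have [le_xn | lt_nx] := leqP x n; last first.
  have gt_xn : n.+1 < x by rewrite ltn_neqAle eq_sym ne_xn.
  by rewrite (leqNgt x n.+1) gt_xn !(andbF, andFb).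
rewrite (leqW le_xn) andbCA [in RHS]andbCA -!all_predI.
by congr (_ && _); apply: eq_all => y /=; lia.
Qed.

Lemma uniq_sets_upto n : uniq (sets_upto n).
Proof.
elim: n => [|n IH] //=.
rewrite cat_uniq IH map_inj_uniq ?IH ?andbT /=; last exact: rcons_injl.
apply/hasPn => r /mapP [s _ ->].
by rewrite mem_sets_upto all_rcons /= ltnn !andbF.
Qed.

Section PartsOf.
Variable n : nat.

Lemma mem_parts_of (S : {set 'I_n}) (i : 'I_n) :
  ((val i).+1 \in parts_of S) = (i \in S).
Proof.
rewrite /parts_of mem_sort (mem_map (f := fun i : 'I_n => (val i).+1)) ?mem_enum //.
by move=> j k /= [] /val_inj.
Qed.

Lemma parts_of_in_sets_upto (S : {set 'I_n}) : parts_of S \in sets_upto n.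
Proof.
rewrite mem_sets_upto ltn_sorted_uniq_leq sort_uniq sort_sorted ?andbT; last exact: leq_total.
rewrite map_inj_uniq ?enum_uniq /=; last by move=> j k /= [] /val_inj.
by apply/allP => x; rewrite mem_sort => /mapP [i _ ->]; exact: ltn_ord.
Qed.

Lemma parts_of_inj : injective (@parts_of n).
Proof. by move=> S T eqST; apply/setP => i; rewrite -!mem_parts_of eqST. Qed.

Lemma parts_of_setK s :
  s \in sets_upto n -> parts_of [set i : 'I_n | (val i).+1 \in s] = s.
Proof.
rewrite mem_sets_upto => /andP [sorted_s bounded_s].
apply: (irr_sorted_eq ltn_trans ltnn) => //.
  have := parts_of_in_sets_upto [set i : 'I_n | (val i).+1 \in s].
  by rewrite mem_sets_upto => /andP [].
move=> x; apply/idP/idP.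
  by rewrite mem_sort => /mapP [i]; rewrite mem_enum inE => s_i ->.
move=> s_x; have := allP bounded_s x s_x; case: x s_x => [|k] s_k //= lt_kn.
by rewrite (mem_parts_of _ (Ordinal lt_kn)) inE.
Qed.

Lemma card_parts_of (P : pred (seq nat)) :
  #|[set S : {set 'I_n} | P (parts_of S)]| = count P (sets_upto n).
Proof.
rewrite cardsE cardE /enum_mem -enumT size_filter -(count_map (@parts_of n) P).
apply/permP/uniq_perm => [||s].
- by rewrite map_inj_uniq ?enum_uniq //; exact: parts_of_inj.
- exact: uniq_sets_upto.
apply/mapP/idP => [[S _ ->] | sets_s]; first exact: parts_of_in_sets_upto.
by exists [set i : 'I_n | (val i).+1 \in s]; rewrite ?mem_enum ?parts_of_setK.
Qed.
End PartsOf.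

Lemma nonsquashing_rcons s m :
  nonsquashing (rcons s m) = nonsquashing s && (sumn s <= m).
Proof.
case: s => [|x s] //; set t := x :: s.
rewrite /nonsquashing size_rcons succnK -[size t]/(size s).+1 succnK.
rewrite -(addn1 (size s)) iotaD all_cat.
congr (_ && _); last first.
  by rewrite add1n /= andbT -cats1 take_size_cat // nth_cat ltnn subnn.
apply: eq_in_all => j; rewrite mem_iota => /andP [_ lt_j].
by rewrite -cats1 takel_cat ?nth_cat ?ifT // ltnW.
Qed.

Lemma count_sets_upto_rcons n (P : pred (seq nat)) :
  count P (sets_upto n.+1) =
  count P (sets_upto n) + count (fun s => P (rcons s n.+1)) (sets_upto n).
Proof. by rewrite /= count_cat count_map. Qed.

Lemma count_sets_upto_last n (P : pred (seq nat)) :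
  count P (sets_upto n) =
  P [::] + \sum_(m < n) count (fun s => P (rcons s m.+1)) (sets_upto m).
Proof.
elim: n => [|n IH]; first by rewrite big_ord0 /= !addn0.
by rewrite count_sets_upto_rcons IH big_ord_recr /= addnA.
Qed.

Lemma mem_leq_sumn x s : x \in s -> x <= sumn s.
Proof.
elim: s => [|y s IH] //=; rewrite inE => /predU1P [-> | /IH le_xs].
  exact: leq_addr.
exact: leq_trans le_xs (leq_addl y _).
Qed.

Lemma count_sets_upto_widen m n (P : pred (seq nat)) : m <= n ->
  (forall s, P s -> all (leq^~ m) s) ->
  count P (sets_upto n) = count P (sets_upto m).
Proof.
move=> + bounded_P; elim: n => [|n IH]; first by rewrite leqn0 => /eqP ->.
rewrite leq_eqVlt ltnS => /predU1P [-> // | le_mn].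
rewrite count_sets_upto_rcons IH // -[RHS]addn0; congr (_ + _).
apply/eqP; rewrite -leqn0 leqNgt -has_count; apply/hasPn => s _.
by apply/negP => /bounded_P; rewrite all_rcons leqNgt ltnS le_mn.
Qed.

Definition nonsquashing_of (k : nat) : pred (seq nat) :=
  fun s => (sumn s == k) && nonsquashing s.

Lemma count_nonsquashing_of [k n] :
  k <= n -> count (nonsquashing_of k) (sets_upto n) = b k.
Proof.
move=> le_kn; rewrite /b (card_parts_of k (nonsquashing_of k)).
apply: count_sets_upto_widen => // s /andP [/eqP sum_s _].
by apply/allP => x /mem_leq_sumn; rewrite sum_s.
Qed.

Lemma f_count n : f n = count nonsquashing (sets_upto n).
Proof. exact: card_parts_of. Qed.

Lemma b0 : b 0 = 1.
Proof. by rewrite -(count_nonsquashing_of (leqnn 0)). Qed.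

Lemma count_leq_split (T : Type) (l : seq T) (h : T -> nat) (a : pred T) t :
  count (fun x => a x && (h x <= t)) l =
  \sum_(k < t.+1) count (fun x => (h x == k) && a x) l.
Proof.
elim: t => [|t IH].
  by rewrite big_ord1; apply: eq_count => x /=; lia.
rewrite big_ord_recr /= -IH {IH}.
by elim: l => [|x l IH] //=; rewrite IH; lia.
Qed.

(* Among the non-squashing sets of sum m+1 in {1..m+1}, only {m+1} uses m+1. *)
Lemma count_nonsquashing_of_top m :
  count (nonsquashing_of m.+1) (sets_upto m) + 1 = b m.+1.
Proof.
rewrite -(count_nonsquashing_of (leqnn m.+1)) count_sets_upto_rcons; congr (_ + _).
rewrite (@eq_count _ _ (nonsquashing_of 0)) => [|s].
  by rewrite (count_nonsquashing_of (leq0n m)) b0.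
rewrite /nonsquashing_of sumn_rcons nonsquashing_rcons.
by case: (nonsquashing s); lia.
Qed.

Lemma f_rec n : f n.+1 + 1 = f n + \sum_(k < n.+2) b k.
Proof.
rewrite !f_count count_sets_upto_rcons.
have -> : count (fun s => nonsquashing (rcons s n.+1)) (sets_upto n) =
          count (fun s => nonsquashing s && (sumn s <= n.+1)) (sets_upto n).
  by apply: eq_count => s; exact: nonsquashing_rcons.
rewrite count_leq_split big_ord_recr /= -!addnA count_nonsquashing_of_top.
rewrite [in RHS]big_ord_recr /=.
by congr (_ + (_ + _)); apply: eq_bigr => k _; apply: count_nonsquashing_of; rewrite -ltnS.
Qed.

(* The partitions of n with largest part n - k; their other parts form a
   non-squashing partition of k into parts < n - k, which for 2k = n excludes
   exactly {k}. *)
Lemma count_largest_part n k : k < n ->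
  count (fun s => nonsquashing_of n (rcons s (n - k.+1).+1)) (sets_upto (n - k.+1))
  + (k.*2 == n) = if k.*2 <= n then b k else 0.
Proof.
move=> lt_kn.
rewrite (@eq_count _ _ (predI (nonsquashing_of k) (fun=> k.*2 <= n))) => [|s]; last first.
  rewrite /= /nonsquashing_of sumn_rcons nonsquashing_rcons.
  by case: (nonsquashing s); lia.
case: (ltngtP k.*2 n) => [lt_k2n | gt_k2n | eq_k2n].
- rewrite addn0 (@eq_count _ _ (nonsquashing_of k)) => [|s]; last exact: andbT.
  by apply: count_nonsquashing_of; lia.
- by rewrite (@eq_count _ _ pred0) ?count_pred0 // => s; rewrite /= andbF.
rewrite (@eq_count _ _ (nonsquashing_of k)) => [|s]; last exact: andbT.
case: k lt_kn eq_k2n => [|j] lt_kn eq_k2n; first by rewrite -eq_k2n in lt_kn.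
by rewrite -count_nonsquashing_of_top; congr (count _ (sets_upto _) + _); lia.
Qed.

Lemma sum_double_eq n : 0 < n -> \sum_(k < n) (k.*2 == n) = ~~ odd n.
Proof.
move=> n_gt0; have lt_half : n./2 < n by lia.
rewrite (bigD1 (Ordinal lt_half)) //= big1 => [|k ne_k]; first by lia.
have ne_val : nat_of_ord k != n./2 by [].
lia.
Qed.

Lemma b_rec n : 0 < n -> b n + ~~ odd n = \sum_(k < n./2.+1) b k.
Proof.
move=> n_gt0.
rewrite -{1}(count_nonsquashing_of (leqnn n)) count_sets_upto_last.
rewrite {1}/nonsquashing_of /= eq_sym (gtn_eqF n_gt0) add0n.
rewrite (reindex_inj rev_ord_inj) /=.
rewrite -sum_double_eq // -big_split /=.
rewrite (eq_bigr (fun k : 'I_n => if k.*2 <= n then b k else 0)) => [|k _]; last first.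
  exact: count_largest_part.
rewrite (big_ord_widen n b); last by lia.
rewrite [in RHS]big_mkcond /=.
by apply: eq_bigr => k _; have -> : (k.*2 <= n) = (k < n./2.+1) by lia.
Qed.

Local Open Scope ring_scope.

Definition fps_shift (a : fps) : fps := fun n => if n is k.+1 then a k else 0.
Definition fps_delta (a : fps) : fps := fps_sub a (fps_shift a).
Definition fps_trunc (n : nat) (a : fps) : {poly int} := \poly_(i < n.+1) a i.

Lemma coef_fps_trunc n a i : (i <= n)%N -> (fps_trunc n a)`_i = a i.
Proof. by move=> le_in; rewrite coef_poly ltnS le_in. Qed.

Lemma fps_mul_coefM n a c (p q : {poly int}) :
  (forall i, (i <= n)%N -> p`_i = a i) -> (forall i, (i <= n)%N -> q`_i = c i) ->
  fps_mul a c n = (p * q)`_n.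
Proof.
move=> pa qc; rewrite coefM; apply: eq_bigr => i _.
by rewrite pa ?qc ?leq_subr // -ltnS.
Qed.

Lemma fps_mul_trunc n a c : fps_mul a c n = (fps_trunc n a * fps_trunc n c)`_n.
Proof. exact/fps_mul_coefM/coef_fps_trunc/coef_fps_trunc. Qed.

Lemma fps_mulC a c : fps_mul a c = fps_mul c a.
Proof. by apply: functional_extensionality => n; rewrite !fps_mul_trunc mulrC. Qed.

Lemma fps_mulA a c d : fps_mul (fps_mul a c) d = fps_mul a (fps_mul c d).
Proof.
apply: functional_extensionality => n.
have trunc_mul a' c' i : (i <= n)%N ->
    (fps_trunc n a' * fps_trunc n c')`_i = fps_mul a' c' i.
  move=> le_in; apply/esym/fps_mul_coefM => j le_ji;
    exact/coef_fps_trunc/(leq_trans le_ji le_in).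
rewrite (@fps_mul_coefM n _ _ (fps_trunc n a * fps_trunc n c) (fps_trunc n d));
  [|exact: trunc_mul | exact: coef_fps_trunc].
rewrite (@fps_mul_coefM n _ _ (fps_trunc n a) (fps_trunc n c * fps_trunc n d)) ?mulrA //.
  exact: coef_fps_trunc.
exact: trunc_mul.
Qed.

Lemma fps_mulDl a c d : fps_mul (fps_add a c) d = fps_add (fps_mul a d) (fps_mul c d).
Proof.
apply: functional_extensionality => n.
by rewrite /fps_mul /fps_add -big_split; apply: eq_bigr => i _; rewrite mulrDl.
Qed.

Lemma fps_mulBl a c d : fps_mul (fps_sub a c) d = fps_sub (fps_mul a d) (fps_mul c d).
Proof.
apply: functional_extensionality => n.
by rewrite /fps_mul /fps_sub -sumrB; apply: eq_bigr => i _; rewrite mulrBl.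
Qed.

Lemma fps_mulXl a : fps_mul fps_X a = fps_shift a.
Proof.
apply: functional_extensionality => -[|n]; rewrite /fps_mul /fps_X.
  by rewrite big_ord1 mul0r.
rewrite 2!big_ord_recl big1 => [|i _]; last by rewrite mul0r.
by rewrite /= mul0r mul1r subn1 add0r addr0.
Qed.

Lemma fps_mul_constl r a : fps_mul (fps_const r) a = fun n => r * a n.
Proof.
apply: functional_extensionality => n.
by rewrite /fps_mul big_ord_recl subn0 big1 ?addr0 // => i _; rewrite mul0r.
Qed.

Lemma fps_mul1l a : fps_mul (fps_const 1) a = a.
Proof. by rewrite fps_mul_constl; apply: functional_extensionality => n; rewrite mul1r. Qed.

Lemma fps_mul_inv_1mx a n : fps_mul a fps_inv_1mx n = \sum_(i < n.+1) a i.
Proof. by apply: eq_bigr => i _; rewrite mulr1. Qed.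

Lemma fps_deltaE a : fps_delta a = fps_mul (fps_sub (fps_const 1) fps_X) a.
Proof. by rewrite fps_mulBl fps_mul1l fps_mulXl. Qed.

Lemma fps_delta_mul_inv_1mx a : fps_delta (fps_mul a fps_inv_1mx) = a.
Proof.
apply: functional_extensionality => -[|n]; rewrite /fps_delta /fps_sub /fps_shift.
  by rewrite fps_mul_inv_1mx big_ord1 subr0.
by rewrite !fps_mul_inv_1mx big_ord_recr /= addrC addrK.
Qed.

Lemma fps_delta_mull a c : fps_delta (fps_mul a c) = fps_mul (fps_delta a) c.
Proof. by rewrite !fps_deltaE fps_mulA. Qed.

Lemma fps_delta_sub a c : fps_delta (fps_sub a c) = fps_sub (fps_delta a) (fps_delta c).
Proof.
by apply: functional_extensionality => -[|n]; rewrite /fps_delta /fps_sub /fps_shift; ring.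
Qed.

Lemma fps_delta_inj a c : fps_delta a =1 fps_delta c -> a =1 c.
Proof.
move=> eq_delta; elim=> [|n IH].
  by have := eq_delta 0%N; rewrite /fps_delta /fps_sub !subr0.
by have := eq_delta n.+1; rewrite /fps_delta /fps_sub /= IH => /addIr.
Qed.

Lemma fps_delta_1pX :
  fps_delta (fps_add (fps_const 1) fps_X) = fps_sub (fps_const 1) (fps_mul fps_X fps_X).
Proof.
rewrite fps_mulXl; apply: functional_extensionality => n.
rewrite /fps_delta /fps_sub /fps_add /fps_shift /fps_const /fps_X.
by case: n => [|[|[|n]]] /=; rewrite ?subr0 ?addr0 ?add0r ?subrr ?sub0r.
Qed.

Lemma f0 : f 0 = 1%N.
Proof. by rewrite f_count. Qed.

Lemma b1 : b 1 = 1%N.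
Proof. by have := b_rec 1 isT; rewrite big_ord1 b0 addn0. Qed.

Lemma coef_delta_Fgf n :
  fps_delta Fgf n = (\sum_(k < n.+1) b k)%N%:Z - (0 < n)%N%:Z.
Proof.
case: n => [|n]; first by rewrite /fps_delta /fps_sub /Fgf big_ord1 f0 b0.
by rewrite /fps_delta /fps_sub /fps_shift /Fgf; have := f_rec n; lia.
Qed.

Lemma delta2_Fgf : fps_delta (fps_delta Fgf) =1 fps_sub Bgf fps_X.
Proof.
case=> [|n]; rewrite {1}/fps_delta /fps_sub /fps_shift ?coef_delta_Fgf.
  by rewrite big_ord1 /Bgf /fps_X b0.
rewrite big_ord_recr /= /Bgf /fps_X.
by case: n => [|n] /=; lia.
Qed.

Lemma Fgf_Bgf : Fgf =1 fps_mul (fps_mul (fps_sub Bgf fps_X) fps_inv_1mx) fps_inv_1mx.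
Proof.
apply: fps_delta_inj; rewrite fps_delta_mul_inv_1mx.
apply: fps_delta_inj; rewrite fps_delta_mul_inv_1mx.
exact: delta2_Fgf.
Qed.

Lemma fps_delta2_rational Q W u v :
  fps_delta (fps_delta (fps_sub (fps_mul (fps_mul Q fps_inv_1mx) u)
    (fps_mul (fps_mul (fps_mul W fps_inv_1mx) fps_inv_1mx) v)))
  = fps_sub (fps_mul (fps_delta Q) u) (fps_mul W v).
Proof.
have mul_inv_1mxAC a c :
    fps_mul (fps_mul a fps_inv_1mx) c = fps_mul (fps_mul a c) fps_inv_1mx.
  by rewrite !fps_mulA (fps_mulC fps_inv_1mx).
rewrite !mul_inv_1mxAC (fps_delta_sub (fps_mul (fps_mul Q u) _)) !fps_delta_mul_inv_1mx.
by rewrite fps_delta_sub fps_delta_mul_inv_1mx fps_delta_mull.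
Qed.

Lemma fps_mul_delta_1pX_sq u :
  fps_mul (fps_delta (fps_mul (fps_add (fps_const 1) fps_X) (fps_add (fps_const 1) fps_X))) u
  = fps_sub (fps_add u (fps_shift u)) (fps_shift (fps_shift (fps_add u (fps_shift u)))).
Proof.
rewrite fps_delta_mull fps_delta_1pX fps_mulA fps_mulBl fps_mul1l fps_mulA !fps_mulXl.
by rewrite fps_mulDl fps_mul1l fps_mulXl.
Qed.

Lemma fps_mul_X_1m2X2 v :
  fps_mul (fps_mul fps_X (fps_sub (fps_const 1) (fps_mul (fps_const 2) (fps_mul fps_X fps_X)))) v
  = fps_shift (fps_sub v (fun n => 2 * fps_shift (fps_shift v) n)).
Proof. by rewrite fps_mulA fps_mulXl fps_mulBl fps_mul1l !fps_mulA fps_mul_constl !fps_mulXl. Qed.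

(* For n >= 3 the n-th coefficient on the left is
   f(n/2) - f(n/2 - 1) + [n odd], which the two recursions turn into b(n). *)
Lemma Bgf_subX_x2E :
  fps_sub
    (fps_mul (fps_delta (fps_mul (fps_add (fps_const 1) fps_X) (fps_add (fps_const 1) fps_X)))
       (fps_subst_x2 Fgf))
    (fps_mul (fps_mul fps_X (fps_sub (fps_const 1) (fps_mul (fps_const 2) (fps_mul fps_X fps_X))))
       (fps_subst_x2 fps_inv_1mx))
  =1 fps_sub Bgf fps_X.
Proof.
rewrite fps_mul_delta_1pX_sq fps_mul_X_1m2X2 => n.
rewrite /fps_sub /fps_add /fps_shift /fps_subst_x2 /Bgf /Fgf /fps_inv_1mx /fps_X.
case: n => [|[|[|k]]] /=.
- by rewrite f0 b0.
- by rewrite f0 b1.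
- by have := b_rec 2 isT; have := f_rec 0; rewrite !big_ord_recr big_ord0 /= b0 b1 f0; lia.
move: (b_rec k.+3 isT) (f_rec (uphalf k)); rewrite /= !uphalf_half.
set S := (\sum_(_ < _) _)%N.
by case: (odd k); rewrite /= ?add0n; lia.
Qed.

Lemma Fgf_Fx2 :
  Fgf =1
    fps_sub
      (fps_mul
         (fps_mul (fps_mul (fps_add (fps_const 1) fps_X) (fps_add (fps_const 1) fps_X))
            fps_inv_1mx)
         (fps_subst_x2 Fgf))
      (fps_mul
         (fps_mul
            (fps_mul
               (fps_mul fps_X
                  (fps_sub (fps_const 1) (fps_mul (fps_const 2) (fps_mul fps_X fps_X))))
               fps_inv_1mx)
            fps_inv_1mx)
         (fps_subst_x2 fps_inv_1mx)).
Proof.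
apply: fps_delta_inj; apply: fps_delta_inj => n.
by rewrite delta2_Fgf fps_delta2_rational Bgf_subX_x2E.
Qed.

Theorem corollary7 :
  (forall n : nat,
     Fgf n = fps_mul (fps_mul (fps_sub Bgf fps_X) fps_inv_1mx) fps_inv_1mx n) /\
  (forall n : nat,
     Fgf n =
       fps_sub
         (fps_mul
            (fps_mul (fps_mul (fps_add (fps_const 1) fps_X)
                              (fps_add (fps_const 1) fps_X))
                     fps_inv_1mx)
            (fps_subst_x2 Fgf))
         (fps_mul
            (fps_mul
               (fps_mul
                  (fps_mul fps_X
                     (fps_sub (fps_const 1)
                        (fps_mul (fps_const 2) (fps_mul fps_X fps_X))))
                  fps_inv_1mx)
               fps_inv_1mx)
            (fps_subst_x2 fps_inv_1mx)) n).
Proof. exact: (conj Fgf_Bgf Fgf_Fx2). Qed.
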